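(* As an identity of formal power series in $x$, \[ \frac{2(2-x)}{(1-x)^2} \sum_{j=0}^\infty f_j\!\left(2-\frac1x, 2-\frac1x\right) = \frac{3}{1-x} + \frac{1-x}{(1-2x)^2}\sum_{j=0}^\infty f_j\!\left(3-\frac1x,3-\frac1x\right). \]
   Context: $(x)_j = x(x+1)\cdots(x+j-1)$ denotes the Pochhammer symbol (with $(x)_0=1$) and $f_j(x,y) = \frac{(j!)^2}{(x)_j (y)_j}$. Note $f_j(2-1/x,2-1/x) = \frac{(j!)^2x^{2j}}{\prod_{i=2}^{j+1}(1-ix)^2}$ and $f_j(3-1/x,3-1/x)=\frac{(j!)^2x^{2j}}{\prod_{i=3}^{j+2}(1-ix)^2}$, which are power series in $x$ of order at least $2j$, so the sums converge formally. *)

From mathcomp Require Import all_boot all_order all_algebra.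
Set Implicit Arguments. Unset Strict Implicit. Unset Printing Implicit Defensive.
Import GRing.Theory Num.Theory.
Local Open Scope ring_scope.

(* A formal power series in x with rational coefficients: n |-> [x^n] *)
Definition ps := nat -> rat.

Definition ps_add (a b : ps) : ps := fun n => a n + b n.
Definition ps_mul (a b : ps) : ps := fun n => \sum_(k < n.+1) a k * b (n - k)%N.
Definition ps_const (c : rat) : ps := fun n => if n == 0%N then c else 0.
Definition ps_poly (p : {poly rat}) : ps := fun n => p`_n.
Definition ps_Xn (m : nat) : ps := fun n => (n == m)%:R.
(* the power series 1/(1 - c x) = sum_n c^n x^n *)
Definition ps_geom (c : rat) : ps := fun n => c ^+ n.

(* f_j(s - 1/x, s - 1/x) = (j!)^2 x^(2j) / prod_{i=s}^{s+j-1} (1 - i x)^2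
   as a formal power series *)
Definition fterm (s j : nat) : ps :=
  ps_mul (ps_const ((j`! ^ 2)%N)%:R)
    (ps_mul (ps_Xn (2 * j))
       (foldr (fun i acc => ps_mul (ps_geom i%:R) (ps_mul (ps_geom i%:R) acc))
              (ps_const 1) (iota s j))).

(* Formal sum of a family F with ord(F j) >= j: coefficient n is the
   (finite) sum over j <= n. *)
Definition ps_sum (F : nat -> ps) : ps := fun n => \sum_(j < n.+1) F j n.

From mathcomp Require Import all_boot all_order all_algebra.
From Stdlib Require Import Ring FunctionalExtensionality.
Import GRing.Theory.
Local Open Scope ring_scope.

(* Write f(s, j) for [fterm s j].  Directly from the product formula,
     (1-2x)^2 f(2, j)   = (1-(j+2)x)^2 f(3, j),
     (1-2x)^2 f(2, j+1) = (j+1)^2 x^2 f(3, j),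
   and with these the cleared summand (1-x)^3 f(3, j) - 2(2-x)(1-2x)^2 f(2, j)
   becomes T j - T (j+1) for T j = (1-2x)^2 ((2j+3)x - 3) f(2, j), a polynomial
   identity in j and x.  As f(2, j) has order at least j the sum telescopes to
   T 0 = 3(1-2x)^2 (x-1); dividing by (1-x)^2 (1-2x)^2 gives the theorem.  The
   algebra runs on Rocq's [ring] over power series, whose ring axioms reduce to
   polynomial ones by truncation. *)


Definition ps_opp (a : ps) : ps := fun n => - a n.
Definition ps_sub (a b : ps) : ps := ps_add a (ps_opp b).

Local Infix "⊗" := ps_mul (at level 40, left associativity).
Local Infix "⊕" := ps_add (at level 50, left associativity).
Local Infix "⊖" := ps_sub (at level 50, left associativity).
Local Notation one := (ps_const 1).
Local Notation two := (one ⊕ one).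
Local Notation three := (one ⊕ one ⊕ one).

Definition trunc (N : nat) (a : ps) : {poly rat} := \poly_(i < N.+1) a i.

Lemma ps_mul_trunc a b n N : (n <= N)%N -> (a ⊗ b) n = (trunc N a * trunc N b)`_n.
Proof.
move=> le_nN; rewrite coefM; apply: eq_bigr => -[i /= lt_in] _.
by rewrite !coef_poly !ltnS (leq_trans (leq_subr i n) le_nN) (leq_trans _ le_nN) // -ltnS.
Qed.

Lemma coefMr_low (p q r : {poly rat}) n :
  (forall k, (k <= n)%N -> p`_k = q`_k) -> (r * p)`_n = (r * q)`_n.
Proof.
by move=> eq_pq; rewrite !coefM; apply: eq_bigr => -[i /= _] _; rewrite eq_pq ?leq_subr.
Qed.

Lemma ps_mulC a b : a ⊗ b = b ⊗ a.
Proof.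
by apply: functional_extensionality => n; rewrite !(ps_mul_trunc _ _ _ _ (leqnn n)) mulrC.
Qed.

Lemma ps_mulA a b c : a ⊗ (b ⊗ c) = a ⊗ b ⊗ c.
Proof.
have trunc_mul u v n k : (k <= n)%N -> (trunc n (u ⊗ v))`_k = (trunc n u * trunc n v)`_k.
  by move=> le_kn; rewrite coef_poly ltnS le_kn (ps_mul_trunc _ _ _ _ le_kn).
apply: functional_extensionality => n.
rewrite !(ps_mul_trunc _ _ _ _ (leqnn n)) (coefMr_low _ _ _ _ (trunc_mul b c n)).
by rewrite [in RHS]mulrC (coefMr_low _ _ _ _ (trunc_mul a b n)) mulrA mulrC.
Qed.

Lemma ps_mul1 a : one ⊗ a = a.
Proof.
apply: functional_extensionality => n.
by rewrite /ps_mul big_ord_recl subn0 mul1r big1 ?addr0 // => i _; rewrite mul0r.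
Qed.

Lemma ps_mulDl a b c : (a ⊕ b) ⊗ c = a ⊗ c ⊕ b ⊗ c.
Proof.
apply: functional_extensionality => n.
by rewrite /ps_mul /ps_add -big_split; apply: eq_bigr => i _; rewrite mulrDl.
Qed.

Lemma ps_ring_theory : ring_theory (ps_const 0) one ps_add ps_mul ps_sub ps_opp eq.
Proof.
split=> [a|a b|a b c||||||a]; try apply: functional_extensionality => n.
- by rewrite /ps_add /ps_const; case: eqP; rewrite add0r.
- exact: addrC.
- exact: addrA.
- exact: ps_mul1.
- exact: ps_mulC.
- exact: ps_mulA.
- exact: ps_mulDl.
- by [].
- by rewrite /ps_add /ps_opp /ps_const subrr; case: eqP.
Qed.

Add Ring ps_ring : ps_ring_theory.

Definition X : ps := ps_Xn 1.

Lemma ps_polyD p q : ps_poly (p + q) = ps_poly p ⊕ ps_poly q.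
Proof. by apply: functional_extensionality => n; rewrite /ps_poly coefD. Qed.

Lemma ps_polyB p q : ps_poly (p - q) = ps_poly p ⊖ ps_poly q.
Proof. by apply: functional_extensionality => n; rewrite /ps_poly coefB. Qed.

Lemma ps_polyM p q : ps_poly (p * q) = ps_poly p ⊗ ps_poly q.
Proof. by apply: functional_extensionality => n; rewrite /ps_poly coefM. Qed.

Lemma ps_polyC c : ps_poly c%:P = ps_const c.
Proof. by apply: functional_extensionality => n; rewrite /ps_poly coefC. Qed.

Lemma ps_poly1 : ps_poly 1 = one.
Proof. exact: ps_polyC. Qed.

Lemma ps_polyXn m : ps_poly 'X^m = ps_Xn m.
Proof. by apply: functional_extensionality => n; rewrite /ps_poly coefXn. Qed.

Lemma ps_polyX : ps_poly 'X = X.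
Proof. by rewrite /X -ps_polyXn expr1. Qed.

Lemma ps_constD a b : ps_const (a + b) = ps_const a ⊕ ps_const b.
Proof. by rewrite -!ps_polyC polyCD ps_polyD. Qed.

Lemma ps_constM a b : ps_const (a * b) = ps_const a ⊗ ps_const b.
Proof. by rewrite -!ps_polyC polyCM ps_polyM. Qed.

Lemma ps_Xn0 : ps_Xn 0%N = one.
Proof. by rewrite -ps_polyXn expr0 ps_poly1. Qed.

Lemma ps_XnS m : ps_Xn m.+1 = ps_Xn m ⊗ X.
Proof. by rewrite -!ps_polyXn exprSr ps_polyM ps_polyX. Qed.

(* [0%:R] and [0] are convertible, but [ring] only identifies the latter with
   its zero. *)
Lemma ps_const_nat0 : ps_const 0%:R = ps_const 0.
Proof. by []. Qed.

Lemma ps_const_natS k : ps_const k.+1%:R = ps_const k%:R ⊕ one.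
Proof. by rewrite -natr1 ps_constD. Qed.

Lemma ps_const_natD k l : ps_const (k + l)%:R = ps_const k%:R ⊕ ps_const l%:R.
Proof. by rewrite natrD ps_constD. Qed.

Lemma ps_const2 : ps_const 2%:R = two.
Proof. by rewrite !ps_const_natS; ring. Qed.

Lemma ps_const3 : ps_const 3%:R = three.
Proof. by rewrite !ps_const_natS; ring. Qed.

Lemma ps_mul_const_coef c a n : (ps_const c ⊗ a) n = c * a n.
Proof.
by rewrite /ps_mul big_ord_recl subn0 big1 ?addr0 // => i _; rewrite /ps_const mul0r.
Qed.

Lemma ps_mul_X_coef a n : (X ⊗ a) n = if n is n'.+1 then a n' else 0.
Proof.
rewrite /ps_mul /X /ps_Xn; case: n => [|n]; first by rewrite big_ord1 mul0r.
rewrite 2!big_ord_recl big1 => [|i _]; last by rewrite mul0r.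
by rewrite /= mul0r mul1r add0r addr0 subn1.
Qed.

(* Oriented with a monomial on the left, as [ring [..]] requires of its
   rewriting hypotheses. *)
Lemma ps_geom_rec c : ps_const c ⊗ X ⊗ ps_geom c = ps_geom c ⊖ one.
Proof.
apply: functional_extensionality => n.
rewrite -ps_mulA ps_mul_const_coef ps_mul_X_coef /ps_sub /ps_add /ps_opp /ps_const /ps_geom.
by case: n => [|n] /=; rewrite ?mulr0 ?expr0 ?subrr // subr0 exprS.
Qed.

Lemma ps_geomK c : (one ⊖ ps_const c ⊗ X) ⊗ ps_geom c = one.
Proof. by have g_rec := ps_geom_rec c; ring [g_rec]. Qed.

Lemma ps_mul_cancel a b u v : a ⊗ b = one -> a ⊗ u = a ⊗ v -> u = v.
Proof.
move=> ab1 eq_uv; transitivity (b ⊗ (a ⊗ u)); first by ring [ab1].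
by rewrite eq_uv; ring [ab1].
Qed.

Definition vanishes_below (a : ps) (k : nat) := forall n, (n < k)%N -> a n = 0.

Lemma vanishes_below_mull a b k : vanishes_below b k -> vanishes_below (a ⊗ b) k.
Proof.
move=> vb n lt_nk; rewrite /ps_mul big1 // => -[i /= _] _.
by rewrite vb ?mulr0 // (leq_ltn_trans (leq_subr i n)).
Qed.

Lemma vanishes_below_mulr a b k : vanishes_below a k -> vanishes_below (a ⊗ b) k.
Proof. by rewrite ps_mulC; apply: vanishes_below_mull. Qed.

Lemma vanishes_below_Xn m : vanishes_below (ps_Xn m) m.
Proof. by move=> n lt_nm; rewrite /ps_Xn ltn_eqF. Qed.

Lemma ps_mul_sumr a F : (forall j, vanishes_below (F j) j) ->
  a ⊗ ps_sum F = ps_sum (fun j => a ⊗ F j).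
Proof.
move=> vF; apply: functional_extensionality => n.
rewrite /ps_sum /ps_mul exchange_big /=; apply: eq_bigr => -[k /= lt_kn] _.
rewrite (big_ord_widen n.+1 (fun j => F j (n - k)%N)) ?ltnS ?leq_subr //.
rewrite big_distrr big_mkcond /=; apply: eq_bigr => -[j /= _] _.
by case: ifPn => //; rewrite -leqNgt => /vF ->; rewrite mulr0.
Qed.

Lemma ps_sumB F G : ps_sum F ⊖ ps_sum G = ps_sum (fun j => F j ⊖ G j).
Proof.
apply: functional_extensionality => n.
by rewrite /ps_sum /ps_sub /ps_add /ps_opp -sumrN -big_split.
Qed.

Lemma ps_sum_telescope D : (forall j, vanishes_below (D j) j) ->
  ps_sum (fun j => D j ⊖ D j.+1) = D 0%N.
Proof.
move=> vD; apply: functional_extensionality => n.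
rewrite /ps_sum /ps_sub /ps_add /ps_opp -(big_mkord xpredT (fun j => D j n - D j.+1 n)).
rewrite (eq_bigr _ (fun j _ => esym (opprB (D j.+1 n) (D j n)))) sumrN.
by rewrite telescope_sumr // vD // sub0r opprK.
Qed.

Definition inv_sqprod (s j : nat) : ps :=
  foldr (fun i acc => ps_geom i%:R ⊗ (ps_geom i%:R ⊗ acc)) one (iota s j).

Lemma ftermE s j :
  fterm s j = ps_const (j`! ^ 2)%:R ⊗ (ps_Xn (2 * j) ⊗ inv_sqprod s j).
Proof. by []. Qed.

Lemma inv_sqprodS s j :
  inv_sqprod s j.+1 = ps_geom s%:R ⊗ (ps_geom s%:R ⊗ inv_sqprod s.+1 j).
Proof. by []. Qed.

Lemma inv_sqprodSr s j :
  inv_sqprod s j.+1 = inv_sqprod s j ⊗ ps_geom (s + j)%:R ⊗ ps_geom (s + j)%:R.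
Proof.
elim: j s => [|j IHj] s; first by rewrite !inv_sqprodS addn0 /inv_sqprod /=; ring.
by rewrite inv_sqprodS IHj inv_sqprodS addSnnS; ring.
Qed.

Lemma vanishes_below_fterm s j : vanishes_below (fterm s j) j.
Proof.
move=> n lt_nj.
apply: vanishes_below_mull _ _ _ (vanishes_below_mulr _ _ _ (vanishes_below_Xn _)) _ _.
by rewrite (leq_trans lt_nj) // leq_pmull.
Qed.

Lemma fterm_shift s j :
  (one ⊖ ps_const s%:R ⊗ X) ⊗ (one ⊖ ps_const s%:R ⊗ X) ⊗ fterm s j
  = (one ⊖ ps_const (s + j)%:R ⊗ X) ⊗ (one ⊖ ps_const (s + j)%:R ⊗ X) ⊗ fterm s.+1 j.
Proof.
have gs := ps_geom_rec s%:R; have gt := ps_geom_rec (s + j)%:R.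
have snoc := esym (inv_sqprodSr s j); rewrite inv_sqprodS in snoc.
rewrite !ftermE.
apply: (ps_mul_cancel
  (ps_geom s%:R ⊗ ps_geom s%:R ⊗ ps_geom (s + j)%:R ⊗ ps_geom (s + j)%:R)
  ((one ⊖ ps_const s%:R ⊗ X) ⊗ (one ⊖ ps_const s%:R ⊗ X)
     ⊗ (one ⊖ ps_const (s + j)%:R ⊗ X) ⊗ (one ⊖ ps_const (s + j)%:R ⊗ X))).
  by ring [gs gt].
ring [gs gt snoc].
Qed.

Lemma fterm_succ s j :
  (one ⊖ ps_const s%:R ⊗ X) ⊗ (one ⊖ ps_const s%:R ⊗ X) ⊗ fterm s j.+1
  = ps_const j.+1%:R ⊗ ps_const j.+1%:R ⊗ X ⊗ X ⊗ fterm s.+1 j.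
Proof.
have gs := ps_geom_rec s%:R.
rewrite !ftermE inv_sqprodS mulnS !ps_XnS factS expnMn natrM natrX expr2 !ps_constM.
ring [gs].
Qed.

Local Notation w := (one ⊖ two ⊗ X).
Local Notation lhs_factor := (two ⊗ (two ⊖ X) ⊗ (w ⊗ w)).
Local Notation rhs_factor := ((one ⊖ X) ⊗ (one ⊖ X) ⊗ (one ⊖ X)).

Definition telescoper (j : nat) : ps :=
  w ⊗ w ⊗ (((two ⊗ ps_const j%:R ⊕ three) ⊗ X ⊖ three) ⊗ fterm 2 j).

Lemma telescoper_step j :
  rhs_factor ⊗ fterm 3 j ⊖ lhs_factor ⊗ fterm 2 j = telescoper j ⊖ telescoper j.+1.
Proof.
have shift := fterm_shift 2 j; have succ := fterm_succ 2 j.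
rewrite ps_const_natD ps_const2 in shift; rewrite ps_const2 in succ.
transitivity (rhs_factor ⊗ fterm 3 j ⊖ two ⊗ (two ⊖ X) ⊗ (w ⊗ w ⊗ fterm 2 j)); first by ring.
rewrite /telescoper.
transitivity (((two ⊗ ps_const j%:R ⊕ three) ⊗ X ⊖ three) ⊗ (w ⊗ w ⊗ fterm 2 j)
  ⊖ ((two ⊗ ps_const j.+1%:R ⊕ three) ⊗ X ⊖ three) ⊗ (w ⊗ w ⊗ fterm 2 j.+1)); last by ring.
by rewrite shift succ ps_const_natS; ring.
Qed.

Lemma telescoper_vanishes_below j : vanishes_below (telescoper j) j.
Proof. exact/vanishes_below_mull/vanishes_below_mull/vanishes_below_fterm. Qed.

Lemma fterm0 s : fterm s 0%N = one.
Proof. by rewrite ftermE muln0 ps_Xn0 fact0 exp1n mulr1n /inv_sqprod /=; ring. Qed.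

Lemma fterm_sums_cleared :
  lhs_factor ⊗ ps_sum (fterm 2)
  = rhs_factor ⊗ ps_sum (fterm 3) ⊕ three ⊗ (one ⊖ X) ⊗ (w ⊗ w).
Proof.
have tele : rhs_factor ⊗ ps_sum (fterm 3) ⊖ lhs_factor ⊗ ps_sum (fterm 2) = telescoper 0.
  rewrite !ps_mul_sumr ?ps_sumB; try exact: vanishes_below_fterm.
  rewrite (functional_extensionality _ _ telescoper_step).
  exact/ps_sum_telescope/telescoper_vanishes_below.
rewrite /telescoper fterm0 ps_const_nat0 in tele.
transitivity (rhs_factor ⊗ ps_sum (fterm 3)
              ⊖ (rhs_factor ⊗ ps_sum (fterm 3) ⊖ lhs_factor ⊗ ps_sum (fterm 2))).
  by ring.
by rewrite tele; ring.
Qed.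

Theorem mainTheorem4 :
  ps_mul (ps_poly (2%:P * (2%:P - 'X)))
         (ps_mul (ps_geom 1) (ps_mul (ps_geom 1) (ps_sum (fterm 2))))
  = ps_add (ps_mul (ps_const 3) (ps_geom 1))
           (ps_mul (ps_poly (1 - 'X))
                   (ps_mul (ps_geom 2) (ps_mul (ps_geom 2) (ps_sum (fterm 3))))).
Proof.
rewrite ps_polyM !ps_polyB ps_poly1 !ps_polyC ps_polyX ps_const2 ps_const3.
set g1 := ps_geom 1; set g2 := ps_geom 2.
have g1_inv : (one ⊖ X) ⊗ g1 = one by rewrite -[X in one ⊖ X]ps_mul1; exact: ps_geomK.
have g2_inv : w ⊗ g2 = one by rewrite -ps_const2; exact: ps_geomK.
apply: (ps_mul_cancel ((one ⊖ X) ⊗ (one ⊖ X) ⊗ w ⊗ w) (g1 ⊗ g1 ⊗ g2 ⊗ g2)).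
  transitivity ((one ⊖ X) ⊗ g1 ⊗ ((one ⊖ X) ⊗ g1) ⊗ (w ⊗ g2) ⊗ (w ⊗ g2)); first by ring.
  by rewrite g1_inv g2_inv; ring.
transitivity (lhs_factor ⊗ ps_sum (fterm 2) ⊗ ((one ⊖ X) ⊗ g1) ⊗ ((one ⊖ X) ⊗ g1)); first by ring.
rewrite g1_inv fterm_sums_cleared.
transitivity (three ⊗ (one ⊖ X) ⊗ (w ⊗ w) ⊗ ((one ⊖ X) ⊗ g1)
              ⊕ rhs_factor ⊗ (w ⊗ g2) ⊗ (w ⊗ g2) ⊗ ps_sum (fterm 3)); last by ring.
by rewrite g1_inv g2_inv; ring.
Qed.
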